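(* Let $S_n=(E_{n-m},K_m)$ be a split graph in which the neighbourhoods of all vertices in $E_{n-m}$ are pairwise distinct. If some vertex $v$ of $K_m$ is adjacent to at least $d+1$ vertices of $E_{n-m}$ that have degree $d$, where $d\leq m-2$, then $S_n$ is not word-representable.
   Context: A graph $G=(V,E)$ is word-representable if there exists a word $w$ over the alphabet $V$ such that for all distinct $x,y\in V$, the letters $x$ and $y$ alternate in $w$ if and only if $xy\in E$ (alternation meaning that deleting all letters other than $x$ and $y$ leaves $xyxy\cdots$ or $yxyx\cdots$). The notation $S_n=(E_{n-m},K_m)$ denotes a split graph on $n$ vertices whose vertex set is partitioned into a maximal clique $K_m$ on $m$ vertices and an independent set $E_{n-m}$ on $n-m$ vertices. *)

(* Simple graphs on a finType T given by a rel e
   (assumed symmetric and irreflexive in the theorem). *)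
From mathcomp Require Import all_boot.
Set Implicit Arguments. Unset Strict Implicit. Unset Printing Implicit Defensive.

Section Defs.
Variable T : finType.

Definition alternate (w : seq T) (x y : T) : Prop :=
  let s := [seq z <- w | (z == x) || (z == y)] in
  forall i, i.+1 < size s -> nth x s i != nth x s i.+1.

Definition word_representable (e : rel T) : Prop :=
  exists w : seq T, (forall x, x \in w) /\
    (forall x y, x != y -> (alternate w x y <-> e x y)).

Definition nbhd (e : rel T) (x : T) : {set T} := [set y | e x y].

Definition is_clique (e : rel T) (A : {set T}) : Prop :=
  forall x y, x \in A -> y \in A -> x != y -> e x y.

Definition is_independent (e : rel T) (A : {set T}) : Prop :=
  forall x y, x \in A -> y \in A -> ~~ e x y.

Definition is_maximal_clique (e : rel T) (K : {set T}) : Prop :=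
  is_clique e K /\ forall u, u \notin K -> exists2 x, x \in K & ~~ e u x.

(* S_n = (E_{n-m}, K_m): vertex set partitioned into a maximal clique K
   (m = #|K|) and an independent set E. *)
Definition split_graph (e : rel T) (E K : {set T}) : Prop :=
  [/\ K :&: E = set0, K :|: E = [set: T], is_maximal_clique e K
    & is_independent e E].
End Defs.

(* Fix a word [w] representing the graph.  Every neighbour of [v] occurs exactly
   once between two consecutive occurrences of [v], and the order of these
   occurrences is a linear order on the clique [K :\ v].  For a vertex [u] of [E]
   adjacent to [v], the non-neighbours of [u] in [K :\ v] form an interval of
   this order: a neighbour [x] of [u] lying between two non-neighbours would, by
   transitivity of alternation along the order, make [u] alternate with one of
   them.  A vertex of degree [d] gives an interval of length [#|K| - d], distinct
   neighbourhoods give distinct intervals, and a linear order on [#|K| - 1]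
   points has only [d] intervals of that length. *)

From mathcomp Require Import all_boot zify.
Set Implicit Arguments. Unset Strict Implicit. Unset Printing Implicit Defensive.

Section Alternation.
Variable T : finType.

Definition prefix_count (w : seq T) (x : T) (i : nat) := count_mem x (take i w).

Definition leads (w : seq T) (x y : T) : Prop :=
  forall i, prefix_count w y i <= prefix_count w x i <= (prefix_count w y i).+1.

Lemma prefix_count_cons (w : seq T) a x i :
  prefix_count (a :: w) x i.+1 = (a == x) + prefix_count w x i.
Proof. by []. Qed.

(* Starting the path at a virtual [y] forces the filtered word to begin with [x]. *)
Lemma path_filter_leads (x y : T) (w : seq T) : x != y ->
  (path (fun a b => a != b) y [seq z <- w | (z == x) || (z == y)] <-> leads w x y) /\
  (path (fun a b => a != b) x [seq z <- w | (z == x) || (z == y)] <-> leads w y x).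
Proof.
move=> xy; rewrite /leads; elim: w => [|a w [IHy IHx]]; first by split; split=> // _ [|i].
have yx : (y == x) = false by rewrite eq_sym (negbTE xy).
case: (eqVneq a x) => [->|ax].
  rewrite /= eqxx /= eq_sym xy /= IHx; split; split.
  - by move=> H [|i] //; rewrite !prefix_count_cons eqxx (negbTE xy); move: (H i); lia.
  - by move=> H i; move: (H i.+1); rewrite !prefix_count_cons eqxx (negbTE xy); lia.
  - by rewrite eqxx.
  - by move=> /(_ 1); rewrite !prefix_count_cons eqxx (negbTE xy) /prefix_count take0.
case: (eqVneq a y) => [->|ay].
  rewrite /= eqxx orbT /= xy /= IHy; split; split.
  - by rewrite eqxx.
  - by move=> /(_ 1); rewrite !prefix_count_cons eqxx yx /prefix_count take0.
  - by move=> H [|i] //; rewrite !prefix_count_cons eqxx yx; move: (H i); lia.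
  - by move=> H i; move: (H i.+1); rewrite !prefix_count_cons eqxx yx; lia.
rewrite /= (negbTE ax) (negbTE ay) /= IHy IHx.
have skip z : (a == z) = false -> forall i, prefix_count (a :: w) z i.+1 = prefix_count w z i.
  by move=> az i; rewrite prefix_count_cons az.
have [sx sy] := (skip x (negbTE ax), skip y (negbTE ay)).
split; split.
- by move=> H [|i] //; rewrite sx sy; exact: H.
- by move=> H i; move: (H i.+1); rewrite sx sy.
- by move=> H [|i] //; rewrite sx sy; exact: H.
- by move=> H i; move: (H i.+1); rewrite sx sy.
Qed.

Lemma alternateP (w : seq T) (x y : T) : x != y ->
  alternate w x y <-> leads w x y \/ leads w y x.
Proof.
move=> xy; have [Py Px] := path_filter_leads w xy.
rewrite -Py -Px /alternate.
set s := [seq z <- w | _].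
have : all (fun z => (z == x) || (z == y)) s.
  by apply/allP=> z; rewrite mem_filter => /andP[].
case: s => [|h s] /=; first by split=> [_|_ i]; [left | rewrite ltn0].
case/andP=> hxy _.
have -> : (forall i, i.+1 < (size s).+1 -> nth x (h :: s) i != nth x (h :: s) i.+1)
    <-> path (fun a b => a != b) h s.
  by split=> [H|/(pathP x) H i]; [apply/(pathP x) => i; exact: H | exact: H].
case/orP: hxy => /eqP -> /=; rewrite eqxx /=.
- by split=> [H|[/andP[]|]//]; left; rewrite eq_sym xy.
- by split=> [H|[|/andP[]]//]; right; rewrite xy.
Qed.

End Alternation.

Section Periods.
Variables (T : finType) (w : seq T) (v : T).

Local Notation cnt := (prefix_count w).

Lemma prefix_count_nth (c : T) i : i < size w -> cnt c i.+1 = cnt c i + (nth v w i == c).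
Proof. by move=> hi; rewrite /prefix_count (take_nth v hi) -cats1 count_cat /= addn0. Qed.

Definition ahead (x : T) : bool :=
  [forall i : 'I_(size w).+1, cnt v i <= cnt x i].

(* For [x] alternating with [v], [ahead x] says whether [x] leads [v].  Then [x]
   occurs once between consecutive occurrences of [v], and in the prefix of
   length [i] it is "done" if [cnt x i = cnt v i + ahead x] and "pending" if
   [cnt x i + 1 = cnt v i + ahead x]; [precedes a b] says that at some moment
   [a] is done while [b] is pending. *)
Definition tracks (x : T) : Prop :=
  x != v /\ forall i, cnt x i <= cnt v i + ahead x <= (cnt x i).+1.

Definition precedes (a b : T) : bool :=
  [exists i : 'I_(size w).+1,
    (cnt a i == cnt v i + ahead a) && (cnt b i + 1 == cnt v i + ahead b)].

Lemma alternate_tracks (x : T) : x != v -> x \in w -> alternate w x v -> tracks x.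
Proof.
move=> xv xw /(alternateP w xv) [L|L]; split=> //.
- have -> : ahead x = true by apply/forallP => i; case/andP: (L i).
  by move=> i; move: (L i); lia.
- have -> : ahead x = false.
    apply/negP => /forallP H.
    have hk : index x w < size w by rewrite index_mem.
    have := L (index x w).+1; rewrite !prefix_count_nth // nth_index // eqxx (negbTE xv).
    have := H (Ordinal (leqW hk)) => /=; lia.
  by move=> i; move: (L i); lia.
Qed.

Lemma precedes_irr a : ~~ precedes a a.
Proof. by apply/existsP => -[i /andP[/eqP h1 /eqP h2]]; lia. Qed.

Lemma precedes_neq a b : precedes a b -> a != b.
Proof. by apply: contraTneq => ->; exact: precedes_irr. Qed.

(* Look at the prefixes just before and just after the first occurrence of [a]. *)
Lemma precedes_total a b : a != b -> a \in w -> tracks a -> tracks b ->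
  precedes a b || precedes b a.
Proof.
move=> ab aw [av Ta] [_ Tb].
have hk : index a w < size w by rewrite index_mem.
have := prefix_count_nth a hk; have := prefix_count_nth b hk; have := prefix_count_nth v hk.
rewrite nth_index // eqxx (negbTE ab) (negbTE av) => sv sb sa.
have := Ta (index a w); have := Ta (index a w).+1; have := Tb (index a w) => Tb0 Ta1 Ta0.
case E: (cnt b (index a w) + 1 == cnt v (index a w) + ahead b); apply/orP.
- left; apply/existsP; exists (Ordinal (hk : (index a w).+1 < (size w).+1)) => /=.
  by apply/andP; split; apply/eqP; move/eqP: E; lia.
- right; apply/existsP; exists (Ordinal (leqW hk)) => /=.
  by apply/andP; split; apply/eqP; move/negbT/eqP: E; lia.
Qed.

Lemma tracks_pending_after_v x : v \in w -> tracks x ->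
  cnt x (index v w).+1 + 1 = cnt v (index v w).+1 + ahead x.
Proof.
move=> vw [xv Tx]; have hk : index v w < size w by rewrite index_mem.
have := prefix_count_nth x hk; have := prefix_count_nth v hk.
rewrite nth_index // eq_sym (negbTE xv) eqxx.
have := Tx (index v w); have := Tx (index v w).+1; lia.
Qed.

Lemma precedes_alternate_le a b : v \in w -> tracks a -> tracks b ->
  alternate w a b -> precedes a b ->
  ahead a <= ahead b /\ forall i, cnt b i + ahead a <= cnt a i + ahead b.
Proof.
move=> vw Ta Tb Aab Pab; move/(alternateP w (precedes_neq Pab)): Aab => L.
move/existsP: Pab => [i1 /andP[/eqP h1 /eqP h2]].
have := tracks_pending_after_v vw Ta; have := tracks_pending_after_v vw Tb.
case: Ta Tb => _ Ta [_ Tb].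
by case: L => L; have := L (index v w).+1; have := L i1 => *;
  (split; first lia) => i; have := L i; have := Ta i; have := Tb i; lia.
Qed.

Lemma precedes_trans a b c : v \in w -> tracks b -> tracks c -> alternate w b c ->
  precedes a b -> precedes b c -> precedes a c.
Proof.
move=> vw Tb Tc Abc Pab Pbc; have [_ Hbc] := precedes_alternate_le vw Tb Tc Abc Pbc.
move/existsP: Pab => [i /andP[/eqP h1 /eqP h2]].
apply/existsP; exists i; rewrite h1 eqxx /=.
by apply/eqP; have := Hbc i; have := Tc.2 i; lia.
Qed.

Lemma precedes_trans_alternate a b c : v \in w -> tracks a -> tracks b -> tracks c ->
  alternate w a b -> alternate w b c -> precedes a b -> precedes b c ->
  a != c -> alternate w a c.
Proof.
move=> vw Ta Tb Tc Aab Abc Pab Pbc ac.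
have [le_ab H1] := precedes_alternate_le vw Ta Tb Aab Pab.
have [le_bc H2] := precedes_alternate_le vw Tb Tc Abc Pbc.
apply/(alternateP w ac); case: (eqVneq (ahead a) (ahead c)) => E; [left|right] => i;
  have := H1 i; have := H2 i; have := Ta.2 i; have := Tb.2 i; have := Tc.2 i; move: E; lia.
Qed.

End Periods.

Section Intervals.
Variables (T : finType) (lt : rel T) (S : {set T}).
Hypothesis lt_irr : irreflexive lt.
Hypothesis lt_trans : forall x y z, x \in S -> y \in S -> z \in S ->
  lt x y -> lt y z -> lt x z.
Hypothesis lt_total : {in S &, forall x y, x != y -> lt x y || lt y x}.

Definition rank x := #|[set y in S | lt y x]|.

Definition convex (B : {set T}) := forall y1 y2 x, y1 \in B -> y2 \in B -> x \in S ->
  lt y1 x -> lt x y2 -> x \in B.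

Definition least (B : {set T}) b := b \in B /\ {in B, forall y, y != b -> lt b y}.

Definition strict_lower_bounds (B : {set T}) := [set y in S | [forall x in B, lt y x]].

Lemma rank_lt x y : x \in S -> y \in S -> lt x y -> rank x < rank y.
Proof.
move=> xS yS xy; apply/proper_card/properP; split.
- by apply/subsetP => z; rewrite !inE => /andP[zS zx]; rewrite zS (lt_trans zS xS yS).
- by exists x; rewrite !inE ?xS ?xy ?lt_irr.
Qed.

Lemma rank_inj : {in S &, injective rank}.
Proof.
move=> x y xS yS Exy; apply/eqP; apply: contraT => xy.
case/orP: (lt_total xS yS xy) => [/(rank_lt xS yS)|/(rank_lt yS xS)]; by rewrite Exy ltnn.
Qed.

Lemma exists_least (B : {set T}) : B \subset S -> B != set0 -> exists b, least B b.
Proof.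
move=> BS /set0Pn[x0 x0B]; case: (arg_minnP rank x0B) => b bB bmin.
exists b; split=> // y yB yb.
have [yS bS] := (subsetP BS y yB, subsetP BS b bB).
have by' : b != y by rewrite eq_sym.
case/orP: (lt_total bS yS by') => // /(rank_lt yS bS).
by rewrite ltnNge bmin.
Qed.

(* An [x] in [B1 :\: B2] would lie above all of [B2], forcing [B2 \subset B1 :\ x]. *)
Lemma convex_eq (B1 B2 : {set T}) b : B1 \subset S -> B2 \subset S ->
  convex B1 -> convex B2 -> #|B1| = #|B2| -> least B1 b -> least B2 b -> B1 = B2.
Proof.
move=> S1 S2 C1 C2 E12 [bB1 m1] [bB2 m2]; apply/eqP; rewrite eqEcard E12 leqnn andbT.
apply/subsetP => x xB1; apply: contraT => xB2.
suff sub : B2 \subset B1 :\ x.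
  by have := subset_leq_card sub; have := cardsD1 x B1; rewrite xB1 E12; lia.
have xS := subsetP S1 x xB1; have xb : x != b by apply: contraNneq xB2 => ->.
apply/subsetP => y yB2; have yx : y != x by apply: contraNneq xB2 => <-.
rewrite !inE yx /=; have [-> //|yb] := eqVneq y b.
have yS := subsetP S2 y yB2; have xy : x != y by rewrite eq_sym.
case/orP: (lt_total xS yS xy) => [xy'|yx'].
- by move: xB2; rewrite (C2 b y x bB2 yB2 xS (m1 x xB1 xb) xy').
- exact: (C1 b x y bB1 xB1 yS (m2 y yB2 yb) yx').
Qed.

Lemma strict_lower_bounds_least (B : {set T}) b : B \subset S -> least B b ->
  strict_lower_bounds B = [set y in S | lt y b].
Proof.
move=> BS [bB bm]; have bS := subsetP BS b bB.
apply/setP => y; rewrite !inE; case yS: (y \in S) => //=.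
apply/forallP/idP => [/(_ b)|yb x]; first by rewrite bB.
apply/implyP => xB; have [-> //|xb] := eqVneq x b.
exact: lt_trans yS bS (subsetP BS x xB) yb (bm x xB xb).
Qed.

Lemma card_strict_lower_bounds (B : {set T}) : B \subset S ->
  #|strict_lower_bounds B| + #|B| <= #|S|.
Proof.
move=> BS; rewrite -cardsUI.
have -> : strict_lower_bounds B :&: B = set0.
  apply/setP => y; rewrite !inE andbC; apply/negP => /andP[yB /andP[_ /forallP/(_ y)]].
  by rewrite yB lt_irr.
rewrite cards0 addn0 subset_leq_card // subUset BS andbT.
by apply/subsetP => y; rewrite inE => /andP[].
Qed.

Lemma convex_eq_of_card_lower_bounds (B1 B2 : {set T}) : B1 \subset S -> B2 \subset S ->
  convex B1 -> convex B2 -> #|B1| = #|B2| -> B1 != set0 ->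
  #|strict_lower_bounds B1| = #|strict_lower_bounds B2| -> B1 = B2.
Proof.
move=> S1 S2 C1 C2 E12 B1n0 El.
have B2n0 : B2 != set0 by rewrite -card_gt0 -E12 card_gt0.
have [[b1 m1] [b2 m2]] := (exists_least S1 B1n0, exists_least S2 B2n0).
suff b12 : b1 = b2 by apply: convex_eq S1 S2 C1 C2 E12 m1 _; rewrite b12.
apply: rank_inj; [exact: subsetP S1 b1 m1.1 | exact: subsetP S2 b2 m2.1 |].
by move: El; rewrite (strict_lower_bounds_least S1 m1) (strict_lower_bounds_least S2 m2).
Qed.

(* Distinct intervals of length [L] have distinct numbers of strict lower bounds,
   each at most [#|S| - L]. *)
Lemma card_convex_family (I : finType) (U : {set I}) (F : I -> {set T}) (L : nat) :
  {in U, forall u, F u \subset S /\ convex (F u)} -> {in U, forall u, #|F u| = L} ->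
  0 < L -> {in U &, injective F} -> #|U| <= #|S| + 1 - L.
Proof.
move=> FS FL L0 Finj.
have lb_small u : u \in U -> #|strict_lower_bounds (F u)| + L <= #|S|.
  by move=> uU; rewrite -(FL u uU); exact: card_strict_lower_bounds (FS u uU).1.
have [->|[u0 u0U]] := set_0Vmem U; first by rewrite cards0.
have -> : #|S| + 1 - L = (#|S| - L).+1 by have := lb_small u0 u0U; lia.
pose r u : 'I_(#|S| - L).+1 := inord #|strict_lower_bounds (F u)|.
rewrite -(card_ord (#|S| - L).+1); apply: (@leq_card_in _ _ r) => u1 u2 u1U u2U.
have r_val u : u \in U -> (r u : nat) = #|strict_lower_bounds (F u)|.
  by move=> uU; rewrite inordK //; have := lb_small u uU; lia.
move/(congr1 (@nat_of_ord _)); rewrite !r_val // => El; apply: Finj => //.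
have [S1 C1] := FS u1 u1U; have [S2 C2] := FS u2 u2U.
apply: convex_eq_of_card_lower_bounds => //; first by rewrite !FL.
by rewrite -card_gt0 FL.
Qed.

End Intervals.

Section Representation.
Variables (T : finType) (e : rel T) (w : seq T).
Hypothesis e_sym : symmetric e.
Hypothesis w_all : forall x, x \in w.
Hypothesis w_repr : forall x y, x != y -> (alternate w x y <-> e x y).

Variables (v : T) (S : {set T}).
Hypothesis S_clique : is_clique e S.
Hypothesis S_nbhd : {in S, forall x, x != v /\ e x v}.

Local Notation precedes := (precedes w v).

Lemma tracks_nbhd x : x != v -> e x v -> tracks w v x.
Proof. by move=> xv exv; apply: alternate_tracks (w_all x) _ => //; apply/w_repr. Qed.

Lemma tracks_in_S x : x \in S -> tracks w v x.
Proof. by move=> /S_nbhd[xv exv]; exact: tracks_nbhd. Qed.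

Lemma alternate_in_S x y : x \in S -> y \in S -> x != y -> alternate w x y.
Proof. by move=> xS yS xy; apply/w_repr => //; exact: S_clique. Qed.

Lemma precedes_trans_in x y z : x \in S -> y \in S -> z \in S ->
  precedes x y -> precedes y z -> precedes x z.
Proof.
move=> xS yS zS Pxy Pyz.
have Ayz := alternate_in_S yS zS (precedes_neq Pyz).
exact: precedes_trans (w_all v) (tracks_in_S yS) (tracks_in_S zS) Ayz Pxy Pyz.
Qed.

Lemma precedes_total_in : {in S &, forall x y, x != y -> precedes x y || precedes y x}.
Proof.
by move=> x y xS yS xy; apply: precedes_total xy (w_all x) _ _; exact: tracks_in_S.
Qed.

Lemma nonneighbours_convex u : u != v -> u \notin S -> e u v ->
  convex precedes S (S :\: nbhd e u).
Proof.
move=> uv uS euv y1 y2 x; rewrite !inE => /andP[ny1 y1S] /andP[ny2 y2S] xS P1 P2.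
rewrite xS andbT; apply/negP => eux.
have [Tu Tx] := (tracks_nbhd uv euv, tracks_in_S xS).
have [Ty1 Ty2] := (tracks_in_S y1S, tracks_in_S y2S).
have neqS z : z \in S -> u != z by move=> zS; apply: contraNneq uS => ->.
have not_alternate z : z \in S -> ~~ e u z -> ~ alternate w u z /\ ~ alternate w z u.
  move=> zS /negP nuz; have uz := neqS z zS; have zu : z != u by rewrite eq_sym.
  by split=> [/(w_repr uz)|/(w_repr zu)]; rewrite // e_sym.
case/orP: (precedes_total (neqS x xS) (w_all u) Tu Tx) => Pux.
- have Aux : alternate w u x by apply/w_repr => //; exact: neqS.
  have Axy2 := alternate_in_S xS y2S (precedes_neq P2).
  apply: (not_alternate y2 y2S ny2).1.
  exact: precedes_trans_alternate (w_all v) Tu Tx Ty2 Aux Axy2 Pux P2 (neqS y2 y2S).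
- have xu : x != u by rewrite eq_sym neqS.
  have Axu : alternate w x u by apply/w_repr; rewrite // e_sym.
  have Ay1x := alternate_in_S y1S xS (precedes_neq P1).
  have y1u : y1 != u by rewrite eq_sym neqS.
  apply: (not_alternate y1 y1S ny1).2.
  exact: precedes_trans_alternate (w_all v) Ty1 Tx Tu Ay1x Axu P1 Pux y1u.
Qed.

End Representation.

Section SplitGraph.
Variables (T : finType) (e : rel T) (E K : {set T}).
Hypothesis HS : split_graph e E K.

Lemma split_graph_notin_clique x : x \in E -> x \notin K.
Proof.
case: HS => KE _ _ _ xE; apply/negP => xK.
by have := in_set0 x; rewrite -KE inE xK xE.
Qed.

Lemma split_graph_nbhd_sub u : u \in E -> nbhd e u \subset K.
Proof.
case: HS => _ KE _ Eind uE; apply/subsetP => y; rewrite inE => euy.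
have := in_setT y; rewrite -KE inE => /orP[//|yE].
by move: (Eind u y uE yE); rewrite euy.
Qed.

Lemma card_nonneighbours u v : u \in E -> v \in K -> e u v ->
  #|(K :\ v) :\: nbhd e u| = #|K| - #|nbhd e u|.
Proof.
move=> uE vK euv; rewrite cardsD.
have -> : (K :\ v) :&: nbhd e u = nbhd e u :\ v.
  by rewrite setIC setIDA (setIidPl (split_graph_nbhd_sub uE)).
have := cardsD1 v K; have := cardsD1 v (nbhd e u); rewrite vK inE euv; lia.
Qed.

Lemma nbhd_eq_of_nonneighbours v u1 u2 : u1 \in E -> u2 \in E -> e u1 v -> e u2 v ->
  (K :\ v) :\: nbhd e u1 = (K :\ v) :\: nbhd e u2 -> nbhd e u1 = nbhd e u2.
Proof.
move=> u1E u2E eu1v eu2v /setP N12; apply/setP => y.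
have [->|yv] := eqVneq y v; first by rewrite !inE eu1v eu2v.
have outside u : u \in E -> y \notin K -> (y \in nbhd e u) = false.
  by move=> uE; apply: contraNF (subsetP (split_graph_nbhd_sub uE) y).
case yK: (y \in K); last by rewrite !outside ?yK.
by move: (N12 y); rewrite !inE yv yK /=; case: (e u1 y); case: (e u2 y).
Qed.

End SplitGraph.

Theorem theorem11 (T : finType) (e : rel T)
  (e_sym : symmetric e) (e_irr : irreflexive e)
  (E K : {set T}) (HS : split_graph e E K)
  (Hdist : {in E &, injective (nbhd e)})
  (v : T) (d : nat) (hv : v \in K) (hd : d + 2 <= #|K|)
  (hdeg : d.+1 <= #|[set u in E | e v u && (#|nbhd e u| == d)]|) :
  ~ word_representable e.
Proof.
case=> w [w_all w_repr]; have [_ _ [K_clique _] _] := HS.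
set U := [set u in E | _] in hdeg; set S := K :\ v.
have UE u : u \in U -> [/\ u \in E, e u v & #|nbhd e u| = d].
  by rewrite inE e_sym => /and3P[? ? /eqP].
have S_clique : is_clique e S.
  by move=> x y /setD1P[_ xK] /setD1P[_ yK]; exact: K_clique.
have S_nbhd : {in S, forall x, x != v /\ e x v}.
  by move=> x /setD1P[xv xK]; split=> //; exact: K_clique.
have lt_irr : irreflexive (precedes w v) by move=> x; exact: negbTE (precedes_irr w v x).
have uS u : u \in E -> u \notin S.
  by move=> uE; rewrite inE negb_and (split_graph_notin_clique HS uE) orbT.
have uv u : u \in E -> u != v.
  by move=> uE; apply: contraNneq (split_graph_notin_clique HS uE) => ->.
have : #|U| <= #|S| + 1 - (#|K| - d).
  apply: (card_convex_family lt_irr (precedes_trans_in w_all w_repr S_clique S_nbhd)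
    (precedes_total_in w_all w_repr S_nbhd) (F := fun u => S :\: nbhd e u))
    => [u /UE[uE euv _]|u /UE[uE euv <-]||u1 u2 /UE[u1E eu1v _] /UE[u2E eu2v _] N12].
  - by split; [exact: subsetDl | exact: nonneighbours_convex (uv u uE) (uS u uE) euv].
  - exact: (card_nonneighbours HS uE hv euv).
  - lia.
  - exact/Hdist/(nbhd_eq_of_nonneighbours HS u1E u2E eu1v eu2v).
by rewrite /S; have := cardsD1 v K; rewrite hv; lia.
Qed.
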